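(* Let $G=\mathbb Z\wr\mathbb Z=\langle y\rangle\wr\langle x\rangle$ and $H=\langle y\rangle^{\langle x\rangle}\langle x^2\rangle$ (a normal subgroup of index 2). Let $f_1:H\to G$ be the homomorphism with $y^{x^{2n}}\mapsto y^{x^n}$, $y^{x^{2n+1}}\mapsto1$, $x^{2n}\mapsto x^n$ ($n\in\mathbb Z$), let $f_2:G\to G$ be the homomorphism with $y\mapsto x$, $x\mapsto1$, and let $f_1':H\to G$, $h\mapsto(x^{-1}hx)^{f_1}$. Then the $G$-data $((2,2,2),(H,H,H),(f_1,f_1',f_2|_H))$ is simple with trivial parabolic subgroup, and it induces a faithful finite-state self-similar representation $G\cong\langle\gamma_1,\alpha_1\rangle\le\mathcal F_6$, where $\gamma_1,\alpha_1\in\mathcal A_6$ are defined by $\gamma_1=(\gamma_1,e,e,\gamma_1,\alpha_1,\alpha_1)$ and $\alpha_1=(e,\alpha_1,e,\alpha_1,e,e)(1\,2)(3\,4)$.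
   Context: Conventions: maps written on the right, $u^v=v^{-1}uv$; wreath products are restricted. For $n\ge2$, $\mathcal A_n$ is the automorphism group of the one-rooted $n$-regular tree with vertices the finite words over $\{1,\dots,n\}$; $\alpha\in\mathcal A_n$ is written $\alpha=(\alpha_1,\dots,\alpha_n)\sigma(\alpha)$ with $\sigma(\alpha)\in S_n$ the first-level action and $\alpha_i$ the states, meaning $(y_1y_2\cdots y_k)^{\alpha}=(y_1)^{\sigma(\alpha)}(y_2\cdots y_k)^{\alpha_{y_1}}$; $e$ is the identity; $\alpha$ is finite-state if its set of states $Q(\alpha)=\{\alpha\}\cup\bigcup_iQ(\alpha_i)$ is finite, and $\mathcal F_n$ is the group of finite-state automorphisms. A $G$-data $(\mathbf m,\mathbf H,\mathbf F)$ consists of subgroups $H_1,\dots,H_s$ with $[G:H_i]=m_i$, $m=\sum m_i$, and homomorphisms $f_i:H_i\to G$. Choosing right transversals $T_i$ of $H_i$, with $\theta_i(g,t)=tg(t')^{-1}$ where $H_it'=H_itg$ and $g^\sigma$ the permutation $t\mapsto t'$ of $T_1\sqcup\dots\sqcup T_s\cong\{1,\dots,m\}$, the data induces $\varphi:G\to\mathcal A_m$, $g^\varphi=((\theta_i(g,t)^{f_i})^\varphi\mid t\in T_i,1\le i\le s)\,g^\sigma$, whose kernel is the $\mathbf F$-core: the largest subgroup of $\bigcap_iH_i$ normal in $G$ and $f_i$-invariant for all $i$ ($K$ is $f$-invariant if $K\subseteq\mathrm{dom}(f)$ and $K^f\le K$). The data is simple if the $\mathbf F$-core is trivial. The parabolic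 subgroup of the data is the largest subgroup of $\bigcap_iH_i$ which is $f_i$-invariant for all $i$. *)

From mathcomp Require Import all_boot.
From Stdlib Require Import ZArith Lia IndefiniteDescription.

Set Implicit Arguments.
Unset Strict Implicit.
Unset Printing Implicit Defensive.

Record grp := Grp {
  gcar :> Type;
  gmul : gcar -> gcar -> gcar;
  ginv : gcar -> gcar;
  gone : gcar }.

Arguments gmul {g} _ _.
Arguments ginv {g} _.
Arguments gone {g}.

Definition is_subgroup (G : grp) (S : G -> Prop) : Prop :=
  S gone /\ (forall a b, S a -> S b -> S (gmul a b)) /\ (forall a, S a -> S (ginv a)).

Definition is_normal (G : grp) (S : G -> Prop) : Prop :=
  forall g s, S s -> S (gmul (gmul (ginv g) s) g).

(* f is a homomorphism H -> G (values outside H are irrelevant) *)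
Definition is_hom_on (G : grp) (H : G -> Prop) (f : G -> G) : Prop :=
  forall a b, H a -> H b -> f (gmul a b) = gmul (f a) (f b).

(* T (a list) is a right transversal of H: every right coset Hg contains
   exactly one listed element (Hg = Ht iff g t^-1 \in H). *)
Definition right_transversal (G : grp) (H : G -> Prop) (T : seq G) : Prop :=
  (forall g, exists t, List.In t T /\ H (gmul g (ginv t))) /\
  (forall k l, k < size T -> l < size T -> k <> l ->
     ~ H (gmul (nth gone T k) (ginv (nth gone T l)))).

Record piece (G : grp) := Piece { pH : G -> bool; pf : G -> G; pT : seq G }.

Definition dflt_piece (G : grp) : piece G := Piece (fun _ : G => false) id [::].

(* validity of the data: H_i subgroups, f_i homomorphisms H_i -> G,
   T_i right transversals (so m_i = size T_i = [G : H_i]) *)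
Definition valid_gdata (G : grp) (D : seq (piece G)) : Prop :=
  forall P, List.In P D ->
    is_subgroup (fun g => pH P g) /\ is_hom_on (fun g => pH P g) (pf P) /\
    right_transversal (fun g => pH P g) (pT P).

Definition f_invariant (G : grp) (dom : G -> Prop) (f : G -> G) (K : G -> Prop) :=
  (forall k, K k -> dom k) /\ (forall k, K k -> K (f k)).

Definition trivial_sub (G : grp) (K : G -> Prop) : Prop := forall k, K k -> k = gone.

(* The F-core is trivial: every subgroup of \bigcap H_i that is normal in G
   and f_i-invariant for all i is trivial (equivalently, the largest such
   subgroup is trivial). *)
Definition gdata_simple (G : grp) (D : seq (piece G)) : Prop :=
  forall K : G -> Prop, is_subgroup K ->
    (forall P, List.In P D -> forall k, K k -> pH P k) ->
    is_normal K ->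
    (forall P, List.In P D -> f_invariant (fun g => pH P g) (pf P) K) ->
    trivial_sub K.

Definition parabolic_trivial (G : grp) (D : seq (piece G)) : Prop :=
  forall K : G -> Prop, is_subgroup K ->
    (forall P, List.In P D -> forall k, K k -> pH P k) ->
    (forall P, List.In P D -> f_invariant (fun g => pH P g) (pf P) K) ->
    trivial_sub K.

(* The points T_1 \sqcup ... \sqcup T_s, in order; a point is (i, t). *)
Definition pts (G : grp) (D : seq (piece G)) : seq (nat * G) :=
  flatten [seq [seq (ip.1, t) | t <- pT ip.2] | ip <- zip (iota 0 (size D)) D].

Section Induced.
Variables (G : grp) (D : seq (piece G)).
Local Notation m := (size (pts D)).

Definition pt (p : 'I_m) : nat * G := nth (0, gone) (pts D) p.
Definition ppiece (p : 'I_m) : piece G := nth (dflt_piece G) D (pt p).1.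

Definition gsigma (g : G) (p : 'I_m) : 'I_m :=
  odflt p [pick q : 'I_m | ((pt q).1 == (pt p).1) &&
                           pH (ppiece p) (gmul (gmul (pt p).2 g) (ginv (pt q).2))].

Definition gtheta (g : G) (p : 'I_m) : G :=
  gmul (gmul (pt p).2 g) (ginv (pt (gsigma g p)).2).

Definition gstate (g : G) (p : 'I_m) : G := pf (ppiece p) (gtheta g p).

Fixpoint phi_act (g : G) (w : seq 'I_m) {struct w} : seq 'I_m :=
  match w with
  | [::] => [::]
  | p :: w' => gsigma g p :: phi_act (gstate g p) w'
  end.
End Induced.
Arguments phi_act {G} D g w.
Arguments gsigma {G} D g p.
Arguments gtheta {G} D g p.
Arguments gstate {G} D g p.
Arguments pt {G} D p.
Arguments ppiece {G} D p.

Definition is_tree_aut (m : nat) (f : seq 'I_m -> seq 'I_m) : Prop :=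
  f [::] = [::] /\ (forall v i, exists j, f (rcons v i) = rcons (f v) j) /\ bijective f.

Definition section (m : nat) (f : seq 'I_m -> seq 'I_m) (v : seq 'I_m) :
  seq 'I_m -> seq 'I_m := fun w => drop (size v) (f (v ++ w)).

Definition finite_state (m : nat) (f : seq 'I_m -> seq 'I_m) : Prop :=
  exists L : seq (seq 'I_m -> seq 'I_m), forall v, List.In (section f v) L.

(* subgroup of A_m generated by a list S (product = apply left factor first) *)
Inductive gen_sub (m : nat) (S : seq (seq 'I_m -> seq 'I_m)) :
  (seq 'I_m -> seq 'I_m) -> Prop :=
| gen_id : gen_sub S id
| gen_in f : List.In f S -> gen_sub S f
| gen_mul f g : gen_sub S f -> gen_sub S g -> gen_sub S (fun w => g (f w))
| gen_inv f g : gen_sub S f -> cancel f g -> cancel g f -> gen_sub S g.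

(* G = Z wr Z = <y> wr <x> (restricted), elements (a, n) = a x^n with  *)
(* a : Z -> Z finitely supported, a = prod_k (y^{x^k})^{a k}.           *)
(* (a,n)(b,m) = (j |-> a j + b (j+n), n+m);  y^{x^k} = (delta_k, 0).    *)
Definition fsupp (a : Z -> Z) : Prop :=
  exists N : Z, forall j : Z, (N < Z.abs j)%Z -> a j = 0%Z.

Definition ZwrZ := { p : (Z -> Z) * Z | fsupp p.1 }.

Lemma fsupp_mul (a b : Z -> Z) (n : Z) :
  fsupp a -> fsupp b -> fsupp (fun j => (a j + b (j + n)%Z)%Z).
Proof.
intros [Na Ha] [Nb Hb]; exists (Z.abs Na + Z.abs Nb + Z.abs n)%Z; intros j Hj.
assert (E1 : a j = 0%Z) by (apply Ha; lia).
assert (E2 : b (j + n)%Z = 0%Z) by (apply Hb; lia).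
lia.
Qed.

Lemma fsupp_inv (a : Z -> Z) (n : Z) : fsupp a -> fsupp (fun j => (- a (j - n)%Z)%Z).
Proof.
intros [Na Ha]; exists (Z.abs Na + Z.abs n)%Z; intros j Hj.
assert (E1 : a (j - n)%Z = 0%Z) by (apply Ha; lia).
lia.
Qed.

Lemma fsupp0 : fsupp (fun _ => 0%Z).
Proof. by exists 0%Z. Qed.

Lemma fsupp_delta0 : fsupp (fun j => if (j =? 0)%Z then 1%Z else 0%Z).
Proof.
exists 0%Z; intros j Hj.
destruct (Z.eqb_spec j 0); [lia | reflexivity].
Qed.

Lemma fsupp_dil (a : Z -> Z) : fsupp a -> fsupp (fun j => a (2 * j)%Z).
Proof.
intros [Na Ha]; exists (Z.abs Na)%Z; intros j Hj; apply Ha; lia.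
Qed.

Definition zw_mul (g h : ZwrZ) : ZwrZ :=
  let a := (proj1_sig g).1 in let n := (proj1_sig g).2 in
  let b := (proj1_sig h).1 in let k := (proj1_sig h).2 in
  exist (fun p => fsupp p.1) (fun j => (a j + b (j + n)%Z)%Z, (n + k)%Z)
        (fsupp_mul n (proj2_sig g) (proj2_sig h)).

Definition zw_inv (g : ZwrZ) : ZwrZ :=
  let a := (proj1_sig g).1 in let n := (proj1_sig g).2 in
  exist (fun p => fsupp p.1) (fun j => (- a (j - n)%Z)%Z, (- n)%Z)
        (fsupp_inv n (proj2_sig g)).

Definition zw_one : ZwrZ := exist (fun p => fsupp p.1) (fun _ => 0%Z, 0%Z) fsupp0.

Definition Gww : grp := Grp zw_mul zw_inv zw_one.

Definition xZ : Gww := exist (fun p => fsupp p.1) (fun _ => 0%Z, 1%Z) fsupp0.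
Definition yZ : Gww :=
  exist (fun p => fsupp p.1) (fun j => if (j =? 0)%Z then 1%Z else 0%Z, 0%Z) fsupp_delta0.

Definition Hw (g : Gww) : bool := Z.even (proj1_sig g).2.

(* f_1 : y^{x^{2n}} |-> y^{x^n}, y^{x^{2n+1}} |-> 1, x^{2n} |-> x^n *)
Definition f1w (g : Gww) : Gww :=
  exist (fun p => fsupp p.1) (fun j => (proj1_sig g).1 (2 * j)%Z, ((proj1_sig g).2 / 2)%Z)
        (fsupp_dil (proj2_sig g)).

Definition f1'w (g : Gww) : Gww := f1w (gmul (gmul (ginv xZ) g) xZ).

Fixpoint zsum_from (a : Z -> Z) (lo : Z) (k : nat) : Z :=
  match k with O => 0%Z | S k' => (a lo + zsum_from a (lo + 1) k')%Z end.

Definition fs_sum (a : Z -> Z) (H : fsupp a) : Z :=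
  let N := proj1_sig (constructive_indefinite_description _ H) in
  zsum_from a (- Z.abs N)%Z (Z.to_nat (2 * Z.abs N + 1)).

(* f_2 : y |-> x, x |-> 1 *)
Definition f2w (g : Gww) : Gww :=
  exist (fun p => fsupp p.1) (fun _ => 0%Z, fs_sum (proj2_sig g)) fsupp0.

Definition D14 : seq (piece Gww) :=
  [:: Piece Hw f1w [:: gone; xZ]; Piece Hw f1'w [:: gone; xZ];
      Piece Hw f2w [:: gone; xZ]].

(* gamma_1 = (gamma_1,e,e,gamma_1,alpha_1,alpha_1),                    *)
(* alpha_1 = (e,alpha_1,e,alpha_1,e,e)(1 2)(3 4)(5 6)  *)
(* letters 1..6 are the ordinals 0..5                                   *)
Inductive st14 := Se | Sg | Sa.

Definition flip6 (i : 'I_6) : 'I_6 := inord (if odd i then i.-1 else i.+1).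

Definition perm14 (q : st14) (i : 'I_6) : 'I_6 :=
  match q with Sa => flip6 i | _ => i end.

Definition next14 (q : st14) (i : 'I_6) : st14 :=
  match q with
  | Se => Se
  | Sg => if (val i == 0) || (val i == 3) then Sg
          else if (val i == 4) || (val i == 5) then Sa else Se
  | Sa => if (val i == 1) || (val i == 3) then Sa else Se
  end.

Fixpoint aut14 (q : st14) (w : seq 'I_6) {struct w} : seq 'I_6 :=
  match w with
  | [::] => [::]
  | i :: w' => perm14 q i :: aut14 (next14 q i) w'
  end.

Definition gamma1 : seq 'I_6 -> seq 'I_6 := aut14 Sg.
Definition alpha1 : seq 'I_6 -> seq 'I_6 := aut14 Sa.

(* The induced permutation of [g] on the six letters only depends on the parity of
   its [x]-exponent, and the states satisfy the cocycle identity of [theta], so the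
   induced map is a homomorphism into the tree automorphisms.  The heart of the matter
   is that a subset [K] of [H] invariant under [f1], [f1'] and [f2] is trivial: [f1]
   halves the [x]-exponent, which must therefore vanish; [f1] and [f1'] read off the
   base function at the even and odd positions, halving its support, and [f2] records
   its exponent sum, which kills a base supported at a single point.  The F-core, the
   parabolic subgroup and the kernel of the representation are all such subsets.
   Finally [y] and [x] act as [gamma1] and [alpha1], whose states lie in
   {e, gamma1, alpha1}; as [x] and [y] generate [G], every induced automorphism is
   finite-state and the image is <gamma1, alpha1>. *)

From mathcomp Require Import all_boot zify.
From Stdlib Require Import ZArith Lia FunctionalExtensionality ProofIrrelevance.
From Stdlib Require Import IndefiniteDescription.

Set Implicit Arguments.
Unset Strict Implicit.
Unset Printing Implicit Defensive.

Definition zbase (g : Gww) : Z -> Z := (proj1_sig g).1.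
Definition ztop (g : Gww) : Z := (proj1_sig g).2.

Open Scope Z_scope.

Lemma zw_ext (g h : Gww) : (forall j, zbase g j = zbase h j) -> ztop g = ztop h -> g = h.
Proof.
case: g h => [[a n] Ha] [[b k] Hb]; rewrite /zbase /ztop /= => E1 E2.
have Eab : a = b by apply: functional_extensionality.
subst; congr exist; exact: proof_irrelevance.
Qed.

Lemma zbaseM g h j : zbase (gmul g h) j = zbase g j + zbase h (j + ztop g).
Proof. by []. Qed.
Lemma ztopM g h : ztop (gmul g h) = ztop g + ztop h.
Proof. by []. Qed.
Lemma zbaseV g j : zbase (ginv g) j = - zbase g (j - ztop g).
Proof. by []. Qed.
Lemma ztopV g : ztop (ginv g) = - ztop g.
Proof. by []. Qed.
Lemma zbase1 j : zbase (@gone Gww) j = 0.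
Proof. by []. Qed.
Lemma ztop1 : ztop (@gone Gww) = 0.
Proof. by []. Qed.
Lemma zbase_x j : zbase xZ j = 0.
Proof. by []. Qed.
Lemma ztop_x : ztop xZ = 1.
Proof. by []. Qed.
Lemma zbase_y j : zbase yZ j = if j =? 0 then 1 else 0.
Proof. by []. Qed.

Ltac zw_simpl := rewrite ?zbaseM ?ztopM ?zbaseV ?ztopV ?zbase1 ?ztop1 ?zbase_x ?ztop_x.

Lemma zmulA (a b c : Gww) : gmul (gmul a b) c = gmul a (gmul b c).
Proof. apply: zw_ext => [j|]; zw_simpl; rewrite ?Z.add_assoc; lia. Qed.
Lemma zmul1g (a : Gww) : gmul gone a = a.
Proof. by apply: zw_ext => [j|]; zw_simpl; rewrite ?Z.add_0_r. Qed.
Lemma zmulg1 (a : Gww) : gmul a gone = a.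
Proof. by apply: zw_ext => [j|]; zw_simpl; rewrite Z.add_0_r. Qed.
Lemma zmulVg (a : Gww) : gmul (ginv a) a = gone.
Proof. apply: zw_ext => [j|]; zw_simpl; rewrite ?Z.add_opp_r; lia. Qed.
Lemma zmulgV (a : Gww) : gmul a (ginv a) = gone.
Proof. apply: zw_ext => [j|]; zw_simpl; rewrite ?Z.add_simpl_r; lia. Qed.
Lemma zinv1 : ginv (@gone Gww) = gone.
Proof. by rewrite -[LHS]zmulg1 zmulVg. Qed.

Lemma zmulgKV (b a : Gww) : gmul (gmul a (ginv b)) b = a.
Proof. by rewrite zmulA zmulVg zmulg1. Qed.

Lemma zmul_cancel (a b c : Gww) : gmul a b = c -> a = gmul c (ginv b).
Proof. by move=> <-; rewrite zmulA zmulgV zmulg1. Qed.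

(** * Sums of finitely supported functions *)

Definition supported_in (a : Z -> Z) (lo hi : Z) : Prop :=
  forall j, a j <> 0 -> lo <= j < hi.

Lemma supported_out a lo hi j : supported_in a lo hi -> j < lo \/ hi <= j -> a j = 0.
Proof. by move=> a_supp Hj; case: (Z.eq_dec (a j) 0) => // /a_supp; lia. Qed.

Lemma zsum_cat a lo (k1 k2 : nat) :
  zsum_from a lo (k1 + k2) = zsum_from a lo k1 + zsum_from a (lo + Z.of_nat k1) k2.
Proof.
elim: k1 lo => [|k1 IH] lo /=; first by rewrite Z.add_0_r.
have -> : lo + Z.of_nat k1.+1 = lo + 1 + Z.of_nat k1 by lia.
by rewrite IH Z.add_assoc.
Qed.

Lemma eq_zsum a b lo (k : nat) :
  (forall j, lo <= j < lo + Z.of_nat k -> a j = b j) -> zsum_from a lo k = zsum_from b lo k.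
Proof.
elim: k lo => [|k IH] lo Eab //=.
by rewrite Eab ?IH // => [j Hj|]; [apply: Eab|]; lia.
Qed.

Lemma zsum_eq0 a lo (k : nat) :
  (forall j, lo <= j < lo + Z.of_nat k -> a j = 0) -> zsum_from a lo k = 0.
Proof.
move=> a0; rewrite (@eq_zsum a (fun _ => 0)) //.
by elim: k {a0} lo => [|k IH] lo //=; rewrite IH.
Qed.

Lemma zsumD a b lo (k : nat) :
  zsum_from (fun j => a j + b j) lo k = zsum_from a lo k + zsum_from b lo k.
Proof. elim: k lo => [|k IH] lo //=; rewrite IH; lia. Qed.

Lemma zsum_shift b n lo (k : nat) :
  zsum_from (fun j => b (j + n)) lo k = zsum_from b (lo + n) k.
Proof.
elim: k lo => [|k IH] lo //=.
by rewrite IH (Z.add_shuffle0 lo 1 n).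
Qed.

Lemma zsum_widen a lo (k : nat) L U :
  supported_in a lo (lo + Z.of_nat k) -> L <= lo -> lo + Z.of_nat k <= U ->
  zsum_from a L (Z.to_nat (U - L)) = zsum_from a lo k.
Proof.
move=> a_supp HL HU.
have -> : Z.to_nat (U - L) = (Z.to_nat (lo - L) + (k + Z.to_nat (U - (lo + Z.of_nat k))))%nat
  by lia.
rewrite !zsum_cat zsum_eq0 => [|j Hj]; last by apply: supported_out a_supp _; lia.
rewrite (@zsum_eq0 a (_ + _ + _)) => [|j Hj]; last by apply: supported_out a_supp _; lia.
by rewrite Z2Nat.id; [rewrite Z.add_0_r Zplus_minus|lia].
Qed.

Lemma zsum_window a lo k lo' k' :
  supported_in a lo (lo + Z.of_nat k) -> supported_in a lo' (lo' + Z.of_nat k') ->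
  zsum_from a lo k = zsum_from a lo' k'.
Proof.
move=> a_supp a_supp'.
set L := Z.min lo lo'; set U := Z.max (lo + Z.of_nat k) (lo' + Z.of_nat k').
rewrite -(@zsum_widen a lo k L U) // ?(@zsum_widen a lo' k' L U) //; lia.
Qed.

Lemma fsupp_supported a N lo hi : (forall j, N < Z.abs j -> a j = 0) ->
  lo <= - Z.abs N -> Z.abs N < hi -> supported_in a lo hi.
Proof.
move=> aN lo_N N_hi j Hj; case: (Z_le_gt_dec (Z.abs j) N) => [|Nj]; first lia.
by case: Hj; apply: aN; lia.
Qed.

Lemma fsupp_window a : fsupp a -> exists lo k, supported_in a lo (lo + Z.of_nat k).
Proof.
case=> N aN; exists (- Z.abs N), (Z.to_nat (2 * Z.abs N + 1)).
by apply: (fsupp_supported aN); lia.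
Qed.

Lemma fs_sumE a (a_fs : fsupp a) lo k :
  supported_in a lo (lo + Z.of_nat k) -> fs_sum a_fs = zsum_from a lo k.
Proof.
move=> a_supp; rewrite /fs_sum.
case: constructive_indefinite_description => N aN; rewrite [proj1_sig _]/=.
by apply: zsum_window (fsupp_supported aN _ _) a_supp; lia.
Qed.

Definition yexp (g : Gww) : Z := fs_sum (proj2_sig g).

Lemma yexp_point g c : (forall j, j <> c -> zbase g j = 0) -> yexp g = zbase g c.
Proof.
move=> g0; rewrite /yexp (@fs_sumE _ _ c 1) /= ?Z.add_0_r // => j Hj.
by case: (Z.eq_dec j c) => [->|/g0]; [lia|].
Qed.

Lemma yexpM g h : yexp (gmul g h) = yexp g + yexp h.
Proof.
have [lo1 [k1 g_supp]] := fsupp_window (proj2_sig g).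
have [lo2 [k2 h_supp]] := fsupp_window (proj2_sig h).
set n := ztop g; set L := Z.min lo1 (lo2 - n).
set K := Z.to_nat (Z.max (lo1 + Z.of_nat k1) (lo2 + Z.of_nat k2 - n) - L).
rewrite /yexp (@fs_sumE _ (proj2_sig g) L K) => [|j /g_supp]; last lia.
rewrite (@fs_sumE _ (proj2_sig h) (L + n) K) => [|j /h_supp]; last lia.
rewrite (@fs_sumE _ (proj2_sig (gmul g h)) L K) => [|j]; first by rewrite -zsum_shift -zsumD.
rewrite -/(zbase (gmul g h) j) zbaseM => gh_j.
case: (Z.eq_dec (zbase g j) 0) => [g_j|/g_supp]; last lia.
have /h_supp : zbase h (j + n) <> 0 by rewrite /n; lia.
lia.
Qed.

Lemma zbase_f1 g j : zbase (f1w g) j = zbase g (2 * j).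
Proof. by []. Qed.
Lemma ztop_f1 g : ztop (f1w g) = ztop g / 2.
Proof. by []. Qed.
Lemma ztop_f2 g : ztop (f2w g) = yexp g.
Proof. by []. Qed.

Lemma zbase_f1' g j : zbase (f1'w g) j = zbase g (2 * j - 1).
Proof. by rewrite /f1'w zbase_f1; zw_simpl; rewrite Z.add_opp_r; lia. Qed.

Lemma Hw_ztop g : Hw g = Z.even (ztop g).
Proof. by []. Qed.

Lemma even_half n : Z.even n -> n = 2 * (n / 2).
Proof. by move=> n_even; have := Z.div_mod n 2; rewrite Zmod_even n_even; lia. Qed.

Lemma f1wM a b : Hw a -> Hw b -> f1w (gmul a b) = gmul (f1w a) (f1w b).
Proof.
rewrite !Hw_ztop => /even_half Ea /even_half Eb.
apply: zw_ext => [j|]; rewrite ?zbase_f1 ?ztop_f1; zw_simpl; rewrite ?zbase_f1 ?ztop_f1.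
  by rewrite {1}Ea Z.mul_add_distr_l.
by rewrite Ea Eb -Z.mul_add_distr_l !(Z.mul_comm 2) !Z_div_mult.
Qed.

Lemma f1'wM a b : Hw a -> Hw b -> f1'w (gmul a b) = gmul (f1'w a) (f1'w b).
Proof.
have Hw_conj g : Hw (gmul (gmul (ginv xZ) g) xZ) = Hw g.
  by rewrite !Hw_ztop; zw_simpl; congr Z.even; lia.
move=> Ha Hb; rewrite /f1'w -f1wM ?Hw_conj //.
by rewrite !zmulA -(zmulA xZ) zmulgV zmul1g.
Qed.

Lemma f2wM a b : f2w (gmul a b) = gmul (f2w a) (f2w b).
Proof. by apply: zw_ext => [j|]; rewrite ?ztopM ?ztop_f2 ?yexpM. Qed.

Lemma Hw_normal : is_normal (fun g : Gww => Hw g).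
Proof. by move=> g s; rewrite !Hw_ztop; zw_simpl; congr Z.even; lia. Qed.

Lemma Hw_subgroup : is_subgroup (fun g : Gww => Hw g).
Proof.
split; [by [] | split=> [a b|a]]; rewrite !Hw_ztop; zw_simpl.
  by rewrite Z.even_add => -> ->.
by rewrite Z.even_opp.
Qed.

Lemma Hw_transversal : right_transversal (fun g : Gww => Hw g) [:: gone; xZ].
Proof.
split=> [g|].
  case E: (Z.even (ztop g)); [exists gone | exists xZ]; (split; first by [left | right; left]).
    by rewrite Hw_ztop; zw_simpl; rewrite Z.add_0_r.
  by rewrite Hw_ztop; zw_simpl; rewrite Z.even_add E.
by case=> [|[|k]] [|[|l]] //= _ _ _; rewrite Hw_ztop; zw_simpl.
Qed.

Lemma valid_D14 : valid_gdata D14.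
Proof.
move=> P [<-|[<-|[<-|[]]]];
  (split; [exact: Hw_subgroup | split; [move=> a b /= | exact: Hw_transversal]]).
- exact: f1wM.
- exact: f1'wM.
- by move=> _ _; apply: f2wM.
Qed.

(** * The induced action *)

Notation I6 := 'I_(size (pts D14)).

Definition flip_if (b : bool) (p : I6) : I6 := if b then flip6 p else p.

Lemma pt_fst (p : I6) : (pt D14 p).1 = (p./2)%nat.
Proof. by case: p => [[|[|[|[|[|[|?]]]]]] ?]. Qed.

Lemma pt_snd (p : I6) : (pt D14 p).2 = if odd p then xZ else gone.
Proof. by case: p => [[|[|[|[|[|[|?]]]]]] ?]. Qed.

Lemma odd_ztop_pt (p : I6) : Z.odd (ztop (pt D14 p).2) = odd p.
Proof. by rewrite pt_snd; case: odd. Qed.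

Lemma pH_D14 (p : I6) : pH (ppiece D14 p) = Hw.
Proof. by case: p => [[|[|[|[|[|[|?]]]]]] ?]. Qed.

Lemma pf_D14 (p : I6) : pf (ppiece D14 p) = nth f1w [:: f1w; f1'w; f2w] p./2.
Proof. by case: p => [[|[|[|[|[|[|?]]]]]] ?]. Qed.

Lemma val_flip6 (p : 'I_6) : val (flip6 p) = if odd p then p.-1 else p.+1.
Proof. by rewrite /flip6 /= inordK; case: p => [[|[|[|[|[|[|?]]]]]] ?]. Qed.

Lemma odd_flip6 (p : 'I_6) : odd (flip6 p) = ~~ odd p.
Proof. by rewrite val_flip6; case: p => [[|[|[|[|[|[|?]]]]]] ?]. Qed.

Lemma flip_ifE b (p q : I6) :
  ((q./2 == p./2)%nat && ~~ xorb (xorb (odd p) b) (odd q)) = (q == flip_if b p).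
Proof.
rewrite -(eqtype.inj_eq val_inj) /flip_if; case: b; rewrite ?val_flip6;
by case: p => [[|[|[|[|[|[|?]]]]]] ?]; case: q => [[|[|[|[|[|[|?]]]]]] ?].
Qed.

Lemma pick_flip g (p q : I6) :
  ((pt D14 q).1 == (pt D14 p).1) && Hw (gmul (gmul (pt D14 p).2 g) (ginv (pt D14 q).2))
  = (q == flip_if (Z.odd (ztop g)) p).
Proof.
rewrite Hw_ztop -Z.negb_odd; zw_simpl.
by rewrite !Z.odd_add Z.odd_opp !odd_ztop_pt !pt_fst flip_ifE.
Qed.

Lemma gsigmaE g (p : I6) : gsigma D14 g p = flip_if (Z.odd (ztop g)) p.
Proof.
rewrite /gsigma pH_D14; case: pickP => [q | no_q]; first by rewrite pick_flip => /eqP.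
by have := no_q (flip_if (Z.odd (ztop g)) p); rewrite pick_flip eqxx.
Qed.

Lemma gtheta_Hw g (p : I6) : Hw (gtheta D14 g p).
Proof.
have := pick_flip g p (flip_if (Z.odd (ztop g)) p).
by rewrite eqxx /gtheta gsigmaE => /andP[].
Qed.

Lemma ppiece_flip b (p : I6) : ppiece D14 (flip_if b p) = ppiece D14 p.
Proof.
rewrite /ppiece !pt_fst; case: b => //=.
by rewrite val_flip6; case: p => [[|[|[|[|[|[|?]]]]]] ?].
Qed.

Lemma flip_ifD b c (p : I6) : flip_if (xorb b c) p = flip_if c (flip_if b p).
Proof.
case: b c => [] [] //=; apply: val_inj; rewrite !val_flip6.
by case: p => [[|[|[|[|[|[|?]]]]]] ?].
Qed.

Lemma gsigmaM g h (p : I6) : gsigma D14 (gmul g h) p = gsigma D14 h (gsigma D14 g p).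
Proof. by rewrite !gsigmaE ztopM Z.odd_add flip_ifD. Qed.

Lemma gthetaM g h (p : I6) :
  gtheta D14 (gmul g h) p = gmul (gtheta D14 g p) (gtheta D14 h (gsigma D14 g p)).
Proof. by rewrite /gtheta gsigmaM !zmulA -(zmulA (ginv _)) zmulVg zmul1g. Qed.

Lemma pfM (p : I6) a b : Hw a -> Hw b ->
  pf (ppiece D14 p) (gmul a b) = gmul (pf (ppiece D14 p) a) (pf (ppiece D14 p) b).
Proof.
move=> Ha Hb; rewrite pf_D14; case: p => [[|[|[|[|[|[|?]]]]]] ?] //=;
  by [apply: f1wM | apply: f1'wM | apply: f2wM].
Qed.

Lemma pf1 (p : I6) : pf (ppiece D14 p) gone = gone.
Proof.
have idem : gmul (pf (ppiece D14 p) gone) (pf (ppiece D14 p) gone) = pf (ppiece D14 p) gone.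
  by rewrite -pfM ?zmul1g.
by rewrite (zmul_cancel idem) zmulgV.
Qed.

Lemma gstateM g h (p : I6) :
  gstate D14 (gmul g h) p = gmul (gstate D14 g p) (gstate D14 h (gsigma D14 g p)).
Proof.
rewrite /gstate gthetaM pfM ?gtheta_Hw //.
by rewrite [in ppiece D14 (gsigma _ _ _)]gsigmaE ppiece_flip.
Qed.

Lemma gstate1 (p : I6) : gstate D14 gone p = gone.
Proof. by rewrite /gstate /gtheta gsigmaE zmulg1 zmulgV pf1. Qed.

Lemma phi_actM g h w : phi_act D14 (gmul g h) w = phi_act D14 h (phi_act D14 g w).
Proof. by elim: w g h => [|p w IH] g h //=; rewrite gsigmaM gstateM IH. Qed.

Lemma phi_act1 w : phi_act D14 gone w = w.
Proof. by elim: w => [|p w IH] //=; rewrite gsigmaE gstate1 IH. Qed.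

Lemma phi_act_tree_aut g : is_tree_aut (phi_act D14 g).
Proof.
split=> //; split=> [v i|].
  elim: v g => [|p v IH] g /=; first by exists (gsigma D14 g i).
  by have [j ->] := IH (gstate D14 g p); exists j.
by exists (phi_act D14 (ginv g)) => w; rewrite -phi_actM ?zmulgV ?zmulVg phi_act1.
Qed.

(** * Invariant subsets of H are trivial *)

Lemma eq0_by_parity (a : Z -> Z) :
  (forall j, a (2 * j) = 0) -> (forall j, a (2 * j - 1) = 0) -> forall j, a j = 0.
Proof.
move=> a_even a_odd j; case: (Z.Even_or_Odd j) => [[i ->] | [i ->]] //.
by have -> : 2 * i + 1 = 2 * (i + 1) - 1 by lia.
Qed.

Section InvariantSubset.

Variable K : Gww -> Prop.
Hypothesis K_Hw : forall k, K k -> Hw k.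
Hypothesis K_f1 : forall k, K k -> K (f1w k).
Hypothesis K_f1' : forall k, K k -> K (f1'w k).
Hypothesis K_f2 : forall k, K k -> K (f2w k).

Lemma invariant_ztop k : K k -> ztop k = 0.
Proof.
move=> Kk; have [n] : exists n : nat, Z.abs (ztop k) <= Z.of_nat n.
  by exists (Z.abs_nat (ztop k)); lia.
elim: n k Kk => [|n IH] k Kk k_n; first lia.
have /even_half Ek : Z.even (ztop k) by rewrite -Hw_ztop K_Hw.
have half_n : Z.abs (ztop k / 2) <= Z.of_nat n by lia.
by have := IH _ (K_f1 Kk); rewrite ztop_f1 => /(_ half_n); lia.
Qed.

(* [f2] records the sum of the base, which is the single value of a point mass. *)
Lemma invariant_point k c : K k -> supported_in (zbase k) c (c + 1) -> forall j, zbase k j = 0.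
Proof.
move=> Kk k_supp j.
case: (Z.eq_dec j c) => [->|jc]; last by apply: supported_out k_supp _; lia.
rewrite -(yexp_point (c := c)) => [|i ic]; last by apply: supported_out k_supp _; lia.
by rewrite -ztop_f2 (invariant_ztop (K_f2 Kk)).
Qed.

Lemma invariant_zbase (n : nat) k :
  K k -> supported_in (zbase k) (- Z.of_nat n) (Z.of_nat n + 2) -> forall j, zbase k j = 0.
Proof.
elim: n k => [|n IH] k Kk k_supp; apply: eq0_by_parity => j.
- rewrite -zbase_f1; apply: (invariant_point (c := 0)) (K_f1 Kk) _ _ => i.
  by rewrite zbase_f1 => /k_supp; lia.
- rewrite -zbase_f1'; apply: (invariant_point (c := 1)) (K_f1' Kk) _ _ => i.
  by rewrite zbase_f1' => /k_supp; lia.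
- by rewrite -zbase_f1; apply: IH (K_f1 Kk) _ _ => i; rewrite zbase_f1 => /k_supp; lia.
- by rewrite -zbase_f1'; apply: IH (K_f1' Kk) _ _ => i; rewrite zbase_f1' => /k_supp; lia.
Qed.

Lemma invariant_trivial k : K k -> k = gone.
Proof.
move=> Kk; apply: zw_ext => [j|]; rewrite ?zbase1 ?ztop1; last exact: invariant_ztop.
have [N k_N] := proj2_sig k.
by apply: (@invariant_zbase (Z.abs_nat N)) => //; apply: (fsupp_supported k_N); lia.
Qed.

End InvariantSubset.

Lemma parabolic_trivial_D14 : parabolic_trivial D14.
Proof.
have D14_1 : List.In (Piece Hw f1w [:: gone; xZ]) D14 by left.
have D14_2 : List.In (Piece Hw f1'w [:: gone; xZ]) D14 by right; left.
have D14_3 : List.In (Piece Hw f2w [:: gone; xZ]) D14 by right; right; left.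
move=> K _ K_H K_inv; apply: invariant_trivial.
- exact: K_H D14_1.
- exact: (K_inv _ D14_1).2.
- exact: (K_inv _ D14_2).2.
- exact: (K_inv _ D14_3).2.
Qed.

Lemma gdata_simple_D14 : gdata_simple D14.
Proof. by move=> K K_sub K_H _ K_inv; apply: parabolic_trivial_D14. Qed.

Lemma gtheta_even k (p : I6) : Hw k -> ~~ odd p -> gtheta D14 k p = k.
Proof.
rewrite Hw_ztop -Z.negb_odd => /negbTE k_even p_even.
by rewrite /gtheta gsigmaE k_even /flip_if pt_snd (negbTE p_even) zmul1g zinv1 zmulg1.
Qed.

Lemma phi_act_inj : injective (phi_act D14).
Proof.
move=> g h phi_gh.
pose K k := forall w, phi_act D14 k w = w.
have K_gh : K (gmul g (ginv h)) by move=> w; rewrite phi_actM phi_gh -phi_actM zmulgV phi_act1.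
have K_Hw k : K k -> Hw k.
  move/(_ [:: Ordinal (isT : 0 < size (pts D14))%nat]) => /= [].
  rewrite gsigmaE Hw_ztop -Z.negb_odd /flip_if; case: (Z.odd _) => // /(congr1 val).
  by rewrite val_flip6.
have K_pf (p : I6) : ~~ odd p -> forall k, K k -> K (pf (ppiece D14 p) k).
  move=> p_even k Kk w; have [] := Kk (p :: w).
  by rewrite /gstate gtheta_even ?K_Hw.
have := invariant_trivial K_Hw (K_pf (Ordinal (isT : 0 < size (pts D14))%nat) isT)
  (K_pf (Ordinal (isT : 2 < size (pts D14))%nat) isT)
  (K_pf (Ordinal (isT : 4 < size (pts D14))%nat) isT) K_gh.
by move=> gh1; rewrite -[g]zmulg1 -(zmulVg h) -zmulA gh1 zmul1g.
Qed.

Definition xyxV : Gww := gmul (gmul xZ yZ) (ginv xZ).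

Ltac zw_compute := apply: zw_ext => [j|];
  rewrite /zbase /ztop; cbn -[Z.mul Z.add Z.div Z.opp Z.sub Z.eqb];
  repeat case: Z.eqb_spec => ?; by [|lia].

Lemma f1w_y : f1w yZ = yZ. Proof. zw_compute. Qed.
Lemma f1w_xyxV : f1w xyxV = gone. Proof. zw_compute. Qed.
Lemma f1'w_y : f1'w yZ = gone. Proof. zw_compute. Qed.
Lemma f1'w_xyxV : f1'w xyxV = yZ. Proof. zw_compute. Qed.
Lemma f1w_xx : f1w (gmul xZ xZ) = xZ. Proof. zw_compute. Qed.
Lemma f1'w_xx : f1'w (gmul xZ xZ) = xZ. Proof. zw_compute. Qed.

Lemma yexp_y : yexp yZ = 1.
Proof. by rewrite (yexp_point (c := 0)) // => j /Z.eqb_neq; rewrite zbase_y => ->. Qed.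

Lemma yexp_x : yexp xZ = 0.
Proof. by rewrite (yexp_point (c := 0)). Qed.

Lemma f2w_y : f2w yZ = xZ.
Proof. by apply: zw_ext => [j|]; rewrite ?ztop_f2 ?yexp_y. Qed.
Lemma f2w_xyxV : f2w xyxV = xZ.
Proof.
have yexp_xV : yexp (ginv xZ) = 0 by rewrite (yexp_point (c := 0)) //= => j; rewrite zbaseV.
by apply: zw_ext => [j|]; rewrite ?ztop_f2 // !yexpM yexp_y yexp_x yexp_xV.
Qed.
Lemma f2w_xx : f2w (gmul xZ xZ) = gone.
Proof. by apply: zw_ext => [j|]; rewrite ?ztop_f2 // yexpM yexp_x. Qed.

#[local] Arguments gmul : simpl never.
#[local] Arguments ginv : simpl never.
#[local] Arguments gone : simpl never.

Definition state_elt (q : st14) : Gww := match q with Se => gone | Sg => yZ | Sa => xZ end.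

Lemma gsigma_state_elt q (p : I6) : gsigma D14 (state_elt q) p = perm14 q p.
Proof. by rewrite gsigmaE; case: q. Qed.

Lemma gtheta_y (p : I6) : gtheta D14 yZ p = if odd p then xyxV else yZ.
Proof. by rewrite /gtheta gsigmaE /= pt_snd; case: odd; rewrite ?zmul1g ?zinv1 ?zmulg1. Qed.

Lemma gtheta_x (p : I6) : gtheta D14 xZ p = if odd p then gmul xZ xZ else gone.
Proof.
rewrite /gtheta gsigmaE /= !pt_snd odd_flip6.
by case: odd; rewrite /= ?zmul1g ?zinv1 ?zmulg1 ?zmulgV.
Qed.

Lemma gstate_state_elt q (p : I6) : gstate D14 (state_elt q) p = state_elt (next14 q p).
Proof.
rewrite /gstate; case: q; first exact: gstate1.
- rewrite gtheta_y pf_D14.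
  case: p => [[|[|[|[|[|[|?]]]]]] ?] //=;
  by rewrite ?f1w_y ?f1w_xyxV ?f1'w_y ?f1'w_xyxV ?f2w_y ?f2w_xyxV.
- rewrite gtheta_x; case: ifP => p_odd.
    rewrite pf_D14; case: p p_odd => [[|[|[|[|[|[|?]]]]]] ?] //= _;
    by rewrite ?f1w_xx ?f1'w_xx ?f2w_xx.
  by rewrite pf1; case: p p_odd => [[|[|[|[|[|[|?]]]]]] ?].
Qed.

Lemma phi_act_state_elt q w : phi_act D14 (state_elt q) w = aut14 q w.
Proof. by elim: w q => [|p w IH] q //=; rewrite gsigma_state_elt gstate_state_elt IH. Qed.

Lemma phi_act_y : phi_act D14 yZ = gamma1.
Proof. exact: functional_extensionality (phi_act_state_elt Sg). Qed.

Lemma phi_act_x : phi_act D14 xZ = alpha1.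
Proof. exact: functional_extensionality (phi_act_state_elt Sa). Qed.

(** * [x] and [y] generate [G] *)

Inductive xy_gen : Gww -> Prop :=
| xy_gen1 : xy_gen gone
| xy_gen_x : xy_gen xZ
| xy_gen_y : xy_gen yZ
| xy_genM a b : xy_gen a -> xy_gen b -> xy_gen (gmul a b)
| xy_genV a : xy_gen a -> xy_gen (ginv a).

Lemma xy_gen_int (e : Z -> Gww) a : xy_gen a -> e 0 = gone ->
  (forall n, e (n + 1) = gmul (e n) a) -> forall n, xy_gen (e n).
Proof.
move=> gen_a e0 eS n.
have [m [->|->]] : exists m : nat, n = Z.of_nat m \/ n = - Z.of_nat m.
  by exists (Z.abs_nat n); lia.
- elim: m => [|m IH]; first by rewrite e0; constructor.
  by rewrite Nat2Z.inj_succ -Z.add_1_r eS; constructor.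
- elim: m => [|m IH]; first by rewrite e0; constructor.
  have := eS (- Z.of_nat m.+1); rewrite (_ : - Z.of_nat m.+1 + 1 = - Z.of_nat m); last by lia.
  by move/esym/zmul_cancel => ->; do !constructor.
Qed.

Definition xpow (n : Z) : Gww := exist (fun p => fsupp p.1) (fun _ => 0, n) fsupp0.

Lemma xy_gen_xpow n : xy_gen (xpow n).
Proof. by apply: (xy_gen_int xy_gen_x) => [|m]; apply: zw_ext. Qed.

Lemma fsupp_point lo c : fsupp (fun j => if j =? lo then c else 0).
Proof. by exists (Z.abs lo) => j Hj; case: Z.eqb_spec => // jlo; lia. Qed.

Definition ypoint (lo c : Z) : Gww :=
  exist (fun p => fsupp p.1) (fun j => if j =? lo then c else 0, 0) (fsupp_point lo c).

Lemma zbase_ypoint lo c j : zbase (ypoint lo c) j = if j =? lo then c else 0.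
Proof. by []. Qed.

Lemma xy_gen_ypoint lo c : xy_gen (ypoint lo c).
Proof.
have gen_yx : xy_gen (gmul (gmul (ginv (xpow lo)) yZ) (xpow lo)).
  by do !constructor; apply: xy_gen_xpow.
apply: (xy_gen_int gen_yx (e := ypoint lo)) => [|m]; apply: zw_ext => [j|] //;
  zw_simpl; rewrite /zbase /ztop /=; repeat case: Z.eqb_spec => ?; lia.
Qed.

Lemma xy_gen_base (k : nat) lo g :
  ztop g = 0 -> supported_in (zbase g) lo (lo + Z.of_nat k) -> xy_gen g.
Proof.
elim: k lo g => [|k IH] lo g g_top g_supp.
  have -> : g = gone by apply: zw_ext => [j|] //; apply: supported_out g_supp _; lia.
  by constructor.
rewrite -(zmulgKV (ypoint lo (zbase g lo)) g); constructor; last exact: xy_gen_ypoint.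
apply: (IH (lo + 1)) => [|j]; zw_simpl; first by rewrite g_top.
rewrite g_top Z.add_0_r Z.sub_0_r zbase_ypoint.
case: Z.eqb_spec => [->|j_lo]; first lia.
by move=> g_j; have := g_supp j; lia.
Qed.

Lemma xy_gen_all g : xy_gen g.
Proof.
rewrite -(zmulgKV (xpow (ztop g)) g); constructor; last exact: xy_gen_xpow.
have [lo [k g_supp]] := fsupp_window (proj2_sig g).
apply: (xy_gen_base (lo := lo) (k := k)) => [|j]; zw_simpl; first by rewrite /ztop /=; lia.
by rewrite /zbase /ztop /= => g_j; apply: g_supp; lia.
Qed.

(** * Sections of the induced automorphisms *)

Fixpoint gstate_at (g : Gww) (v : seq I6) : Gww :=
  if v is p :: v' then gstate_at (gstate D14 g p) v' else g.

Lemma phi_act_cat g v w :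
  phi_act D14 g (v ++ w) = phi_act D14 g v ++ phi_act D14 (gstate_at g v) w.
Proof. by elim: v g => [|p v IH] g //=; rewrite IH. Qed.

Lemma size_phi_act g v : size (phi_act D14 g v) = size v.
Proof. by elim: v g => [|p v IH] g //=; rewrite IH. Qed.

Lemma section_phi_act g v : section (phi_act D14 g) v = phi_act D14 (gstate_at g v).
Proof.
apply: functional_extensionality => w.
by rewrite /section phi_act_cat -(size_phi_act g v) drop_size_cat.
Qed.

Lemma gstate_atM g h v :
  gstate_at (gmul g h) v = gmul (gstate_at g v) (gstate_at h (phi_act D14 g v)).
Proof. by elim: v g h => [|p v IH] g h //=; rewrite gstateM IH. Qed.

Lemma gstate_at1 v : gstate_at gone v = gone.
Proof. by elim: v => [|p v IH] //=; rewrite gstate1. Qed.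

Lemma gstate_atV g v : gstate_at (ginv g) v = ginv (gstate_at g (phi_act D14 (ginv g) v)).
Proof.
have := gstate_atM (ginv g) g v; rewrite zmulVg gstate_at1 => /esym.
by move/zmul_cancel; rewrite zmul1g.
Qed.

Lemma gstate_at_state_elt q v : exists q', gstate_at (state_elt q) v = state_elt q'.
Proof. by elim: v q => [|p v IH] q /=; [exists q | rewrite gstate_state_elt]. Qed.

Lemma finitely_many_states g : exists L : seq Gww, forall v, List.In (gstate_at g v) L.
Proof.
elim: (xy_gen_all g) => {g} [||| a b _ [La a_L] _ [Lb b_L] | a _ [La a_L]].
- by exists [:: gone] => v; rewrite gstate_at1; left.
- exists [:: gone; yZ; xZ] => v.
  by have [q ->] := gstate_at_state_elt Sa v; case: q => /=; tauto.
- exists [:: gone; yZ; xZ] => v.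
  by have [q ->] := gstate_at_state_elt Sg v; case: q => /=; tauto.
- exists (List.flat_map (fun u => List.map (gmul u) Lb) La) => v.
  rewrite gstate_atM; apply/List.in_flat_map; exists (gstate_at a v).
  by split=> //; apply: List.in_map.
- by exists (List.map ginv La) => v; rewrite gstate_atV; apply: List.in_map.
Qed.

Lemma finite_state_phi_act g : finite_state (phi_act D14 g).
Proof.
have [L g_L] := finitely_many_states g.
by exists (List.map (phi_act D14) L) => v; rewrite section_phi_act; apply: List.in_map.
Qed.

Lemma phi_actM_fun g h : phi_act D14 (gmul g h) = (fun w => phi_act D14 h (phi_act D14 g w)).
Proof. exact: functional_extensionality (phi_actM g h). Qed.

Lemma phi_act1_fun : phi_act D14 gone = id.
Proof. exact: functional_extensionality phi_act1. Qed.

Lemma phi_act_image t :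
  (exists g : Gww, phi_act D14 g = t) <-> gen_sub [:: gamma1; alpha1] t.
Proof.
split=> [[g <-] | ].
  elim: (xy_gen_all g) => {g} [||| a b _ gen_a _ gen_b | a _ gen_a].
  - by rewrite phi_act1_fun; apply: gen_id.
  - by rewrite phi_act_x; apply: gen_in; right; left.
  - by rewrite phi_act_y; apply: gen_in; left.
  - by rewrite phi_actM_fun; apply: gen_mul.
  - by apply: (gen_inv gen_a) => w; rewrite -phi_actM ?zmulgV ?zmulVg phi_act1.
elim=> {t} [| f [<-|[<-|[]]] | f g _ [a <-] _ [b <-] | f g _ [a <-] fg gf].
- by exists gone; rewrite phi_act1_fun.
- by exists yZ; rewrite phi_act_y.
- by exists xZ; rewrite phi_act_x.
- by exists (gmul a b); rewrite phi_actM_fun.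
- exists (ginv a); apply: functional_extensionality => w.
  by rewrite -[in RHS](phi_act1 w) -(zmulVg a) phi_actM fg.
Qed.

Close Scope Z_scope.

Theorem mainTheorem14 :
  is_normal (fun g : Gww => Hw g) /\ valid_gdata D14 /\
  gdata_simple D14 /\ parabolic_trivial D14 /\
  (forall g : Gww, is_tree_aut (phi_act D14 g)) /\
  (forall g h : Gww, phi_act D14 (gmul g h) = (fun w => phi_act D14 h (phi_act D14 g w))) /\
  injective (phi_act D14) /\
  phi_act D14 yZ = gamma1 /\ phi_act D14 xZ = alpha1 /\
  (forall g : Gww, finite_state (phi_act D14 g)) /\
  (forall t : seq 'I_6 -> seq 'I_6,
      (exists g : Gww, phi_act D14 g = t) <-> gen_sub [:: gamma1; alpha1] t).
Proof.
split; first exact: Hw_normal.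
split; first exact: valid_D14.
split; first exact: gdata_simple_D14.
split; first exact: parabolic_trivial_D14.
split; first exact: phi_act_tree_aut.
split; first exact: phi_actM_fun.
split; first exact: phi_act_inj.
split; first exact: phi_act_y.
split; first exact: phi_act_x.
split; first exact: finite_state_phi_act.
exact: phi_act_image.
Qed.
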